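(* Let $A$ be an instance and $K\in\{\mathbb{B},\mathbb{N}\}$. Then $[A]_{\leftrightarrow}$ admits a left query algorithm over $K$ if and only if $\mathrm{CSP}(A)$ admits a left query algorithm over $K$.
   Context: A schema is a finite set of relation symbols, each with a positive arity. An instance $A$ over a schema $\sigma$ assigns to each $R\in\sigma$ of arity $r$ a finite $r$-ary relation $R^A$; $\mathrm{adom}(A)$ is the set of elements occurring in its facts. A homomorphism $h:A\to B$ is a map $h:\mathrm{adom}(A)\to\mathrm{adom}(B)$ preserving every relation; we write $A\to B$ if one exists. $A,B$ are homomorphically equivalent if $A\to B$ and $B\to A$; $[A]_{\leftrightarrow}$ is the class of all instances homomorphically equivalent to $A$. $\mathrm{CSP}(B)=\{A: A\to B\}$. $\hom_{\mathbb{N}}(A,B)$ is the number of homomorphisms $A\to B$; $\hom_{\mathbb{B}}(A,B)=1$ if $A\to B$ and $0$ otherwise. For $\mathcal{F}=\{F_1,\dots,F_k\}$, $\hom_K(\mathcal{F},A)=(\hom_K(F_i,A))_{i\le k}$. A left $k$-query algorithm over $K$ for a class $\mathcal{C}$ (closed under isomorphism) is a pair $(\mathcal{F},X)$ with $|\mathcal{F}|=k$ and $X$ a set of $k$-tuples over $K$ (no effectiveness required) such that for every instance $D$: $D\in\mathcal{C}$ iff $\hom_K(\mathcal{F},D)\in X$; $\mathcal{C}$ admits one if one exists for some $k>0$. *)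

From mathcomp Require Import all_boot.
Set Implicit Arguments. Unset Strict Implicit. Unset Printing Implicit Defensive.

(* A schema: a finite type of relation symbols [S] with arities [ar]
   (positivity of arities is a hypothesis of the main theorem).
   Instances have elements drawn from [nat]; since every finite instance is
   isomorphic to one over [nat] and all classes considered are closed under
   isomorphism, quantifying over such instances is faithful. *)
Record instance (S : finType) (ar : S -> nat) := Instance {
  rel : forall R : S, seq ((ar R).-tuple nat)
}.
Arguments rel {S ar} i R.

Section Hom.
Variables (S : finType) (ar : S -> nat).
Implicit Types A B D : instance ar.

Definition adom A : seq nat :=
  undup (flatten [seq flatten [seq val t | t <- rel A R] | R <- enum S]).

(* extend a map adom(A) -> adom(B) to nat (values outside adom(A) irrelevant) *)
Definition ext A B (h : {ffun seq_sub (adom A) -> seq_sub (adom B)}) (x : nat) : nat :=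
  if insub x is Some y then val (h y) else 0.

Definition is_hom A B (h : {ffun seq_sub (adom A) -> seq_sub (adom B)}) : bool :=
  [forall R : S, all (fun t => map_tuple (ext h) t \in rel B R) (rel A R)].

Definition homto A B : Prop := exists h, @is_hom A B h.

Definition hom_N A B : nat := #|[set h | @is_hom A B h]|.

Definition hom_B A B : nat := [exists h, @is_hom A B h].

End Hom.

Inductive semiring := KB | KN.

Definition homK (K : semiring) (S : finType) (ar : S -> nat) (A B : instance ar) : nat :=
  match K with KB => hom_B A B | KN => hom_N A B end.

Definition hom_equiv_class (S : finType) (ar : S -> nat) (A : instance ar) : instance ar -> Prop :=
  fun D => homto A D /\ homto D A.

Definition CSP (S : finType) (ar : S -> nat) (A : instance ar) : instance ar -> Prop :=
  fun D => homto D A.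

Definition left_query_algorithm (K : semiring) (S : finType) (ar : S -> nat)
    (C : instance ar -> Prop) (k : nat)
    (F : k.-tuple (instance ar)) (X : k.-tuple nat -> Prop) : Prop :=
  forall D : instance ar, C D <-> X (map_tuple (fun Fi => homK K Fi D) F).

Definition admits_left_query_algorithm (K : semiring) (S : finType) (ar : S -> nat)
    (C : instance ar -> Prop) : Prop :=
  exists k, 0 < k /\ exists F X, @left_query_algorithm K S ar C k F X.

From Pilot Require Import Defs.
From mathcomp Require Import all_boot.
Set Implicit Arguments. Unset Strict Implicit. Unset Printing Implicit Defensive.

(* Both directions rest on [admits_of_determined]: if the vector of K-counts
   of homomorphisms from a fixed nonempty family determines membership in a
   class, then that family, with the set of count vectors of members, is a
   left query algorithm for the class.
   - CSP(A) => [A]: prepend [A] to the family, since [D] is in [A]<-> iff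
     [A -> D] (a positive count) and [D] is in CSP(A).
   - [A] => CSP(A): [D -> A] iff the disjoint union [A ⊎ D] is in [A]<->
     ([dunion_class]).  A homomorphism [F -> A ⊎ D] is the same as a set [P]
     of elements of [F] that is a union of components, a homomorphism from
     [F] restricted to [P] into [D], and one from the rest of [F] into [A]
     ([card_fibre]).  Hence hom_K(F, A ⊎ D) is determined by the counts
     hom_K(F|P, D) ([homK_dunion_det]), and the restrictions of the given
     family to all sets [P] form the new family.
   To count, homomorphisms are represented by normal maps between initial
   segments of [nat] ([hom_N_normal]), so that cutting and gluing them is
   plain arithmetic on [nat] (evens for [D], odds for [A]). *)

Section Homomorphisms.
Variables (S : finType) (ar : S -> nat).
Implicit Types A B C D F : instance ar.

Definition homb A B (f : nat -> nat) : bool :=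
  [forall R, all (fun t => map_tuple f t \in Defs.rel B R) (Defs.rel A R)].

Lemma hombP A B f :
  reflect (forall R t, t \in Defs.rel A R -> map_tuple f t \in Defs.rel B R) (homb A B f).
Proof.
apply: (iffP forallP) => [H R t tA | H R]; first exact: (allP (H R)).
by apply/allP => t; apply: H.
Qed.

Lemma mem_adomP A x :
  reflect (exists R, exists2 t, t \in Defs.rel A R & x \in val t) (x \in adom A).
Proof.
rewrite /adom mem_undup; apply: (iffP flattenP).
  move=> [s /mapP [R _ ->] /flattenP [s' /mapP [t tA ->] xt]].
  by exists R; exists t.
move=> [R [t tA xt]]; exists (flatten [seq val t | t <- Defs.rel A R]).
  by apply/mapP; exists R; rewrite ?mem_enum.
by apply/flattenP; exists (val t) => //; apply/mapP; exists t.
Qed.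

Lemma mem_adom A R t x : t \in Defs.rel A R -> x \in val t -> x \in adom A.
Proof. by move=> tA xt; apply/mem_adomP; exists R; exists t. Qed.

Lemma map_tuple_in n (f g : nat -> nat) (t : n.-tuple nat) :
  {in val t, f =1 g} -> map_tuple f t = map_tuple g t.
Proof. by move=> fg; apply: val_inj; apply/eq_in_map. Qed.

Lemma homb_eq_in A B f g : {in adom A, f =1 g} -> homb A B f = homb A B g.
Proof.
move=> fg; apply/hombP/hombP => H R t tA.
  by rewrite -(map_tuple_in (f := f)) ?H // => x /(mem_adom tA) /fg.
by rewrite (map_tuple_in (g := g)) ?H // => x /(mem_adom tA) /fg.
Qed.

Lemma ext_in A B (h : {ffun seq_sub (adom A) -> seq_sub (adom B)}) x
  (xA : x \in adom A) : ext h x = val (h (SeqSub xA)).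
Proof.
rewrite /ext; case: insubP => [u _ ux|]; last by rewrite xA.
by congr (val (h _)); apply: val_inj.
Qed.

Lemma ext_out A B (h : {ffun seq_sub (adom A) -> seq_sub (adom B)}) x :
  x \notin adom A -> ext h x = 0.
Proof. by rewrite /ext; case: insubP => // u ux _ /negP; rewrite ux. Qed.

Lemma homtoP A B : homto A B <-> exists f, homb A B f.
Proof.
split=> [[h hh] | [f /hombP hf]]; first by exists (ext h).
have fB (y : seq_sub (adom A)) : f (val y) \in adom B.
  have /mem_adomP [R [t tA yt]] := ssvalP y.
  by apply: (mem_adom (hf R t tA)); rewrite /= map_f.
exists [ffun y => SeqSub (fB y)].
rewrite /is_hom -/(homb _ _ _) (homb_eq_in _ (g := f)); first exact/hombP.
by move=> x xA; rewrite (ext_in _ xA) ffunE.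
Qed.

Lemma homb_comp A B C f g : homb A B f -> homb B C g -> homb A C (g \o f).
Proof.
move=> /hombP hf /hombP hg; apply/hombP => R t tA.
have -> : map_tuple (g \o f) t = map_tuple g (map_tuple f t).
  by apply: val_inj; rewrite /= map_comp.
exact/hg/hf.
Qed.

Lemma homB_N A B : hom_B A B = (0 < hom_N A B).
Proof.
rewrite /hom_B /hom_N; congr nat_of_bool.
apply/existsP/card_gt0P => [[h hh] | [h]]; first by exists h; rewrite inE.
by rewrite inE => hh; exists h.
Qed.

Lemma homK_pos K A B : 0 < homK K A B <-> homto A B.
Proof.
have homN_pos : (0 < hom_N A B) <-> homto A B.
  rewrite /hom_N; split => [/card_gt0P [h] | [h hh]]; first by rewrite inE; exists h.
  by apply/card_gt0P; exists h; rewrite inE.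
by case: K => //=; rewrite homB_N lt0b.
Qed.

End Homomorphisms.

Definition oenc (x : nat) : nat := x.*2.+1.

Section DisjointUnion.
Variables (S : finType) (ar : S -> nat).
Implicit Types A D : instance ar.

(* The disjoint union [A ⊎ D] of two instances: [D] is placed on the even
   numbers and [A] on the odd numbers. *)
Definition dunion A D : instance ar := @Instance S ar (fun R =>
  map (map_tuple double) (Defs.rel D R) ++ map (map_tuple oenc) (Defs.rel A R)).

Lemma odd_oenc x : odd (oenc x).
Proof. by rewrite /oenc /= odd_double. Qed.

Lemma half_oenc x : (oenc x)./2 = x.
Proof. exact: uphalf_double. Qed.

Lemma oenc_half k : odd k -> oenc k./2 = k.
Proof. by move=> ok; rewrite /oenc -[RHS]odd_double_half ok add1n. Qed.

Lemma homb_dunionl A D : homb D (dunion A D) double.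
Proof. by apply/hombP => R t tD; rewrite mem_cat map_f. Qed.

Lemma homb_dunionr A D : homb A (dunion A D) oenc.
Proof. by apply/hombP => R t tA; rewrite mem_cat map_f ?orbT. Qed.

Lemma homb_dunion_fold A D f : homb D A f ->
  homb (dunion A D) A (fun x => if odd x then x./2 else f x./2).
Proof.
move=> /hombP hf; apply/hombP => R t; rewrite mem_cat => /orP [] /mapP [s sin ->].
  rewrite (_ : map_tuple _ (map_tuple double s) = map_tuple f s); first exact: hf sin.
  by apply: val_inj; rewrite /= -map_comp; apply: eq_map => y /=; rewrite odd_double doubleK.
rewrite (_ : map_tuple _ (map_tuple oenc s) = s) //; apply: val_inj.
rewrite /= -map_comp (eq_map (g := id)) ?map_id // => y.
by rewrite /comp odd_oenc half_oenc.
Qed.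

Lemma dunion_class A D : homto D A <-> hom_equiv_class A (dunion A D).
Proof.
split=> [/homtoP [f hf] | [_ /homtoP [g hg]]].
  split; apply/homtoP; first by exists oenc; apply: homb_dunionr.
  by eexists; apply: homb_dunion_fold hf.
by apply/homtoP; exists (g \o double); exact: homb_comp (homb_dunionl A D) hg.
Qed.

Lemma dunion_fact_side A D R g (t : (ar R).-tuple nat) :
  map_tuple g t \in Defs.rel (dunion A D) R ->
  {in val t, forall y, ~~ odd (g y)} \/ {in val t, forall y, odd (g y)}.
Proof.
rewrite mem_cat => /orP [] /mapP [s _ /(congr1 val) /= E]; [left | right] => y yt.
  have /mapP [w _ ->] : g y \in map double s by rewrite -E map_f.
  by rewrite odd_double.
have /mapP [w _ ->] : g y \in map oenc s by rewrite -E map_f.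
exact: odd_oenc.
Qed.

Section Parity.
Hypothesis ar_pos : forall R, 0 < ar R.

(* Facts of [A ⊎ D] whose image is even come from [D], odd ones from [A];
   arities are positive, so a fact cannot be on both sides at once. *)
Lemma dunion_fact_even A D R g (t : (ar R).-tuple nat) :
  map_tuple g t \in Defs.rel (dunion A D) R -> {in val t, forall y, ~~ odd (g y)} ->
  map_tuple (fun y => (g y)./2) t \in Defs.rel D R.
Proof.
have t0 := mem_tnth (Ordinal (ar_pos R)) t.
move=> + ev; rewrite mem_cat => /orP [] /mapP [s sin /(congr1 val) /= E].
  rewrite (_ : map_tuple _ t = s) //; apply: val_inj.
  by rewrite /= (map_comp half g) E -map_comp (eq_map (g := id)) ?map_id // => w /=; rewrite doubleK.
have /mapP [w _ gw] : g (tnth t (Ordinal (ar_pos R))) \in map oenc s by rewrite -E map_f.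
by have := ev _ t0; rewrite gw odd_oenc.
Qed.

Lemma dunion_fact_odd A D R g (t : (ar R).-tuple nat) :
  map_tuple g t \in Defs.rel (dunion A D) R -> {in val t, forall y, odd (g y)} ->
  map_tuple (fun y => (g y)./2) t \in Defs.rel A R.
Proof.
have t0 := mem_tnth (Ordinal (ar_pos R)) t.
move=> + od; rewrite mem_cat => /orP [] /mapP [s sin /(congr1 val) /= E]; last first.
  rewrite (_ : map_tuple _ t = s) //; apply: val_inj.
  by rewrite /= (map_comp half g) E -map_comp (eq_map (g := id)) ?map_id // => w; exact: half_oenc.
have /mapP [w _ gw] : g (tnth t (Ordinal (ar_pos R))) \in map double s by rewrite -E map_f.
by have := od _ t0; rewrite gw odd_double.
Qed.

End Parity.

Lemma adom_dunion A D z : z \in adom (dunion A D) ->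
  if odd z then z./2 \in adom A else z./2 \in adom D.
Proof.
move=> /mem_adomP [R [t]]; rewrite mem_cat => /orP [] /mapP [s sin ->] /= /mapP [w ws ->].
  by rewrite odd_double doubleK; exact: mem_adom sin ws.
by rewrite odd_oenc half_oenc; exact: mem_adom sin ws.
Qed.

Lemma adom_dunionl A D d : d \in adom D -> d.*2 \in adom (dunion A D).
Proof.
move=> /mem_adomP [R [t tD dt]]; have /hombP /(_ R t tD) tU := homb_dunionl A D.
by apply: (mem_adom tU); rewrite /= map_f.
Qed.

Lemma adom_dunionr A D a : a \in adom A -> oenc a \in adom (dunion A D).
Proof.
move=> /mem_adomP [R [t tA ta]]; have /hombP /(_ R t tA) tU := homb_dunionr A D.
by apply: (mem_adom tU); rewrite /= map_f.
Qed.

End DisjointUnion.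

Section Restriction.
Variables (S : finType) (ar : S -> nat).
Implicit Types F : instance ar.

Definition restrict F (q : pred nat) : instance ar := @Instance S ar (fun R =>
  filter (fun t : (ar R).-tuple nat => all q (val t)) (Defs.rel F R)).

Lemma adom_restrict F q y : y \in adom (restrict F q) -> y \in adom F /\ q y.
Proof.
move=> /mem_adomP [R [t]]; rewrite mem_filter => /andP [/allP qt tF] yt.
by split; [exact: mem_adom tF yt | exact: qt].
Qed.

Definition separates F (q : pred nat) : bool :=
  [forall R, all (fun t : (ar R).-tuple nat => all q (val t) || all (predC q) (val t))
     (Defs.rel F R)].

Lemma adom_restrict_sep F q y :
  separates F q -> y \in adom F -> (y \in adom (restrict F q)) = q y.
Proof.
move=> /forallP sep yF; apply/idP/idP => [/adom_restrict [] // | qy].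
have /mem_adomP [R [t tF yt]] := yF; apply: (mem_adom _ yt).
rewrite mem_filter tF andbT.
by case/orP: (allP (sep R) t tF) => // /allP /(_ y yt) /=; rewrite qy.
Qed.

Lemma separatesC F q : separates F q -> separates F (predC q).
Proof.
move=> /forallP sep; apply/forallP => R; apply/allP => t tF.
have qCC : predC (predC q) =1 q by move=> y /=; rewrite negbK.
by rewrite orbC (eq_all qCC); apply: (allP (sep R)).
Qed.

End Restriction.

Section NormalMaps.
Variables (S : finType) (ar : S -> nat) (n m : nat).
Implicit Types F B : instance ar.
Local Notation nmap := {ffun 'I_n.+1 -> 'I_m.+1}.

Definition appf (f : nmap) (y : nat) : nat := if y <= n then val (f (inord y)) else 0.

Lemma appf_le f y : y <= n -> appf f y = val (f (inord y)).
Proof. by rewrite /appf => ->. Qed.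

Definition normal_hom F B (f : nmap) : bool :=
  [forall x : 'I_n.+1, if val x \in adom F then val (f x) \in adom B else val (f x) == 0]
  && homb F B (appf f).

Lemma normal_homP F B (f : nmap) :
  reflect ((forall x : 'I_n.+1, if val x \in adom F then val (f x) \in adom B
                               else val (f x) == 0) /\ homb F B (appf f))
          (normal_hom F B f).
Proof. by apply: (iffP andP) => [[/forallP] | [/forallP]]. Qed.

Variables (F B : instance ar).
Hypotheses (bF : {in adom F, forall y, y <= n}) (bB : {in adom B, forall y, y <= m}).
Local Notation homs := {ffun seq_sub (adom F) -> seq_sub (adom B)}.

Definition normalize (h : homs) : nmap := [ffun x => inord (ext h (val x))].

Lemma normalizeE h x : val (normalize h x) = ext h (val x).
Proof.
rewrite ffunE /= inordK // ltnS; case: (boolP (val x \in adom F)) => xF.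
  by rewrite (ext_in _ xF) bB ?ssvalP.
by rewrite ext_out.
Qed.

Lemma appf_normalize h : {in adom F, appf (normalize h) =1 ext h}.
Proof. by move=> y yF; rewrite appf_le ?bF // normalizeE /= inordK // ltnS bF. Qed.

Lemma normalize_inj : injective normalize.
Proof.
move=> h1 h2 E; apply/ffunP => y; apply: val_inj; have yF := ssvalP y.
have := congr1 (fun f : nmap => appf f (val y)) E.
rewrite !appf_normalize // !(ext_in _ yF).
by have -> : SeqSub yF = y by apply: val_inj.
Qed.

Lemma normalize_hom h : is_hom h -> normal_hom F B (normalize h).
Proof.
move=> hh; apply/normal_homP; split; last by rewrite (homb_eq_in _ (appf_normalize h)).
move=> x; rewrite normalizeE; case: ifP => [xF | /negbT xF]; last by rewrite ext_out.
by rewrite (ext_in _ xF) ssvalP.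
Qed.

Lemma normal_hom_normalize f : normal_hom F B f -> exists2 h, is_hom h & f = normalize h.
Proof.
move=> /normal_homP [fB fhom].
have hB (y : seq_sub (adom F)) : appf f (val y) \in adom B.
  have yn : val y <= n by rewrite bF ?ssvalP.
  by have := fB (inord (val y)); rewrite appf_le // /= inordK // ssvalP.
pose h := [ffun y => SeqSub (hB y)].
have ext_h : {in adom F, ext h =1 appf f} by move=> y yF; rewrite (ext_in _ yF) ffunE.
exists h; first by rewrite /is_hom -/(homb _ _ _) (homb_eq_in _ ext_h).
apply/ffunP => x; apply: val_inj; rewrite normalizeE.
have := fB x; case: ifP => [xF _ | /negbT xF /eqP ->]; last by rewrite ext_out.
by rewrite ext_h // appf_le ?bF // inord_val.
Qed.

Lemma hom_N_normal : hom_N F B = #|[set f | normal_hom F B f]|.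
Proof.
rewrite /hom_N -(card_imset _ normalize_inj); apply: eq_card => f.
rewrite inE; apply/imsetP/idP => [[h] | /normal_hom_normalize [h hh ->]].
  by rewrite inE => /normalize_hom hh ->.
by exists h; rewrite ?inE.
Qed.

End NormalMaps.

Lemma half_le k : k./2 <= k.
Proof. by rewrite leq_half_double -addnn ltnW // ltnS leq_addr. Qed.

Section ProductFormula.
Variables (S : finType) (ar : S -> nat).
Hypothesis ar_pos : forall R, 0 < ar R.
Variables (n m : nat) (A D F : instance ar).
Hypotheses (bF : {in adom F, forall y, y <= n})
  (bD : {in adom D, forall y, y.*2.+1 <= m}) (bA : {in adom A, forall y, y.*2.+1 <= m}).
Local Notation nmap := {ffun 'I_n.+1 -> 'I_m.+1}.
Local Notation U := (dunion A D).

Definition side (f : nmap) : {set 'I_n.+1} := [set x | (val x \in adom F) && ~~ odd (f x)].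

Variable P : {set 'I_n.+1}.

Definition pset : pred nat := fun y => (y <= n) && (inord y \in P).

Lemma pset_val (x : 'I_n.+1) : pset (val x) = (x \in P).
Proof. by rewrite /pset -ltnS ltn_ord inord_val. Qed.

(* [P] consists of elements of [F] and no fact of [F] crosses its border,
   i.e. [P] is a union of connected components of [F]. *)
Definition closed : bool := [forall x in P, val x \in adom F] && separates F pset.

Local Notation FP := (restrict F pset).
Local Notation FQ := (restrict F (predC pset)).

Definition fibre := [set f : nmap | normal_hom F U f & side f == P].

Lemma fibre_side f x : f \in fibre -> val x \in adom F -> (x \in P) = ~~ odd (f x).
Proof. by rewrite inE => /andP [_ /eqP <-] xF; rewrite inE xF. Qed.

Lemma fibre_pset f y : f \in fibre -> y \in adom F -> pset y = ~~ odd (appf f y).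
Proof.
move=> ff yF; have yn := bF yF; rewrite /pset yn appf_le //=.
by rewrite (fibre_side ff) //= inordK.
Qed.

Lemma fibre_closed f : f \in fibre -> closed.
Proof.
move=> ff; apply/andP; split.
  apply/forallP => x; apply/implyP; move: ff; rewrite inE => /andP [_ /eqP <-].
  by rewrite inE => /andP [].
apply/forallP => R; apply/allP => t tF.
have tU : map_tuple (appf f) t \in Defs.rel U R.
  by move: ff; rewrite inE => /andP [/andP [_ /hombP hf] _]; exact: hf.
have pt y : y \in val t -> pset y = ~~ odd (appf f y).
  by move=> yt; apply: fibre_pset (mem_adom tF yt).
case: (dunion_fact_side tU) => H; apply/orP; [left | right];
  by apply/allP => y yt /=; rewrite pt // H.
Qed.

Local Notation homs_FP := [set g : nmap | normal_hom FP D g].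
Local Notation homs_FQ := [set g : nmap | normal_hom FQ A g].

Section Closed.
Hypothesis closedP : closed.

Lemma closed_adom x : x \in P -> val x \in adom F.
Proof. by move=> xP; case/andP: closedP => /forallP /(_ x) /implyP ->. Qed.

Lemma adom_FP y : (y \in adom FP) = (y \in adom F) && pset y.
Proof.
case: (boolP (y \in adom F)) => yF; first by rewrite adom_restrict_sep //; case/andP: closedP.
by apply/negbTE; apply: contra yF => /adom_restrict [].
Qed.

Lemma adom_FQ y : (y \in adom FQ) = (y \in adom F) && ~~ pset y.
Proof.
case: (boolP (y \in adom F)) => yF.
  by rewrite adom_restrict_sep //; apply: separatesC; case/andP: closedP.
by apply/negbTE; apply: contra yF => /adom_restrict [].
Qed.

Lemma adom_FP_val x : (val x \in adom FP) = (x \in P).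
Proof.
by rewrite adom_FP pset_val; case: (boolP (x \in P)) => [/closed_adom -> | _]; rewrite ?andbF.
Qed.

Lemma adom_FQ_val x : (val x \in adom FQ) = (val x \in adom F) && (x \notin P).
Proof. by rewrite adom_FQ pset_val. Qed.

Definition cut (f : nmap) : nmap * nmap :=
  ([ffun x => inord (if x \in P then (val (f x))./2 else 0)],
   [ffun x => inord (if x \in P then 0 else (val (f x))./2)]).

Definition glue (g : nmap * nmap) : nmap := [ffun x => inord
  (if x \in P then (val (g.1 x)).*2 else if val x \in adom F then oenc (val (g.2 x)) else 0)].

Lemma cut1E f x : val ((cut f).1 x) = if x \in P then (val (f x))./2 else 0.
Proof.
rewrite ffunE /= inordK // ltnS; case: ifP => // _.
by apply: leq_trans (half_le _) _; rewrite -ltnS.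
Qed.

Lemma cut2E f x : val ((cut f).2 x) = if x \in P then 0 else (val (f x))./2.
Proof.
rewrite ffunE /= inordK // ltnS; case: ifP => // _.
by apply: leq_trans (half_le _) _; rewrite -ltnS.
Qed.

Lemma glueE g : normal_hom FP D g.1 -> normal_hom FQ A g.2 -> forall x,
  val (glue g x) =
  if x \in P then (val (g.1 x)).*2 else if val x \in adom F then oenc (val (g.2 x)) else 0.
Proof.
move=> /normal_homP [g1D _] /normal_homP [g2A _] x.
rewrite ffunE /= inordK // ltnS; case: ifP => xP.
  by have := g1D x; rewrite adom_FP_val xP => /bD /ltnW.
by case: ifP => // xF; have := g2A x; rewrite adom_FQ_val xF xP => /bA.
Qed.

Lemma appf_cut1 f y : pset y -> appf (cut f).1 y = (appf f y)./2.
Proof. by case/andP => yn yP; rewrite !appf_le // cut1E yP. Qed.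

Lemma appf_cut2 f y : y <= n -> ~~ pset y -> appf (cut f).2 y = (appf f y)./2.
Proof. by move=> yn; rewrite /pset yn /= => /negbTE yP; rewrite !appf_le // cut2E yP. Qed.

Lemma appf_glue1 g y : normal_hom FP D g.1 -> normal_hom FQ A g.2 ->
  pset y -> appf (glue g) y = (appf g.1 y).*2.
Proof. by move=> g1D g2A /andP [yn yP]; rewrite !appf_le // glueE // yP. Qed.

Lemma appf_glue2 g y : normal_hom FP D g.1 -> normal_hom FQ A g.2 ->
  y \in adom F -> ~~ pset y -> appf (glue g) y = oenc (appf g.2 y).
Proof.
move=> g1D g2A yF; have yn := bF yF; rewrite /pset yn /= => /negbTE yP.
by rewrite !appf_le // glueE // yP /= inordK ?ltnS // yF.
Qed.

Lemma cut_hom f : f \in fibre -> normal_hom FP D (cut f).1 /\ normal_hom FQ A (cut f).2.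
Proof.
move=> ff; have := ff; rewrite inE => /andP [/normal_homP [fU /hombP hf] _].
have ev x : x \in P -> ~~ odd (f x) by move=> xP; rewrite -(fibre_side ff (closed_adom xP)).
split; apply/normal_homP; split.
- move=> x; rewrite adom_FP_val cut1E; case: (boolP (x \in P)) => // xP.
  by have := fU x; rewrite (closed_adom xP) => /adom_dunion; rewrite (negbTE (ev x xP)).
- apply/hombP => R t; rewrite mem_filter => /andP [pt tF].
  rewrite (map_tuple_in (g := fun y => (appf f y)./2)); last first.
    by move=> y yt; apply: appf_cut1; exact: (allP pt).
  apply: (dunion_fact_even ar_pos (hf R t tF)) => y yt.
  by rewrite -(fibre_pset ff (mem_adom tF yt)); exact: (allP pt).
- move=> x; rewrite adom_FQ_val cut2E; case: (boolP (x \in P)) => xP; first by rewrite andbF.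
  have := fU x; case: (boolP (val x \in adom F)) => xF /=; last by move=> /eqP ->.
  have od : odd (f x) by rewrite -[odd _]negbK -(fibre_side ff xF) xP.
  by move=> /adom_dunion; rewrite od.
- apply/hombP => R t; rewrite mem_filter => /andP [pt tF].
  rewrite (map_tuple_in (g := fun y => (appf f y)./2)); last first.
    by move=> y yt; apply: appf_cut2; [exact: bF (mem_adom tF yt) | exact: (allP pt)].
  apply: (dunion_fact_odd ar_pos (hf R t tF)) => y yt.
  by rewrite -[odd _]negbK -(fibre_pset ff (mem_adom tF yt)); exact: (allP pt).
Qed.

Lemma glue_hom g : normal_hom FP D g.1 -> normal_hom FQ A g.2 -> glue g \in fibre.
Proof.
move=> g1D g2A; have := g1D; have := g2A.
move=> /normal_homP [g2adom g2hom] /normal_homP [g1adom g1hom].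
rewrite inE; apply/andP; split; first (apply/normal_homP; split).
- move=> x; rewrite glueE //.
  case: (boolP (val x \in adom F)) => xF; case: (boolP (x \in P)) => xP.
  + by apply: adom_dunionl; have := g1adom x; rewrite adom_FP_val xP.
  + by apply: adom_dunionr; have := g2adom x; rewrite adom_FQ_val xF xP.
  + by move: xF; rewrite closed_adom.
  + by [].
- apply/hombP => R t tF; case/andP: closedP => _ /forallP /(_ R) /allP /(_ t tF) /orP [] pt.
  + have tFP : t \in Defs.rel FP R by rewrite mem_filter pt.
    rewrite (map_tuple_in (g := double \o appf g.1)); last first.
      by move=> y yt; apply: appf_glue1 => //; exact: (allP pt).
    by have /hombP /(_ R t tFP) := homb_comp g1hom (homb_dunionl A D).
  + have tFQ : t \in Defs.rel FQ R by rewrite mem_filter pt.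
    rewrite (map_tuple_in (g := oenc \o appf g.2)); last first.
      by move=> y yt; apply: appf_glue2 => //; [exact: mem_adom tF yt | exact: (allP pt)].
    by have /hombP /(_ R t tFQ) := homb_comp g2hom (homb_dunionr A D).
- apply/eqP/setP => x; rewrite inE glueE //.
  case: (boolP (x \in P)) => xP; first by rewrite closed_adom //= odd_double.
  by case: (val x \in adom F); rewrite ?odd_oenc.
Qed.

Lemma glueK : {in fibre, cancel cut glue}.
Proof.
move=> f ff; have [h1 h2] := cut_hom ff.
have := ff; rewrite inE => /andP [/normal_homP [fU _] _].
apply/ffunP => x; apply: val_inj; rewrite glueE // cut1E cut2E.
case: (boolP (x \in P)) => xP.
  by rewrite even_halfK // -(fibre_side ff (closed_adom xP)).
have := fU x; case: (boolP (val x \in adom F)) => xF; last by move=> /eqP ->.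
by rewrite oenc_half // -[odd _]negbK -(fibre_side ff xF).
Qed.

Lemma cutK g : normal_hom FP D g.1 -> normal_hom FQ A g.2 -> cut (glue g) = g.
Proof.
case: g => g1 g2 /= g1D g2A; have := g1D; have := g2A.
move=> /normal_homP [g2adom _] /normal_homP [g1adom _].
have mE := glueE (g := (g1, g2)) g1D g2A.
congr pair; apply/ffunP => x; apply: val_inj; rewrite ?cut1E ?cut2E mE /=.
  case: (boolP (x \in P)) => xP; first exact: doubleK.
  by have := g1adom x; rewrite adom_FP_val (negbTE xP) => /eqP.
have := g2adom x; rewrite adom_FQ_val.
case: (boolP (x \in P)) => xP; first by rewrite andbF => /eqP.
by rewrite andbT; case: (val x \in adom F) => [_ | /eqP ->]; rewrite ?half_oenc.
Qed.

Lemma card_fibre_closed : #|fibre| = #|homs_FP| * #|homs_FQ|.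
Proof.
rewrite -cardsX -(card_in_imset (f := cut) (D := fibre)); last first.
  by move=> f1 f2 ff1 ff2 E; rewrite -(glueK ff1) E glueK.
apply: eq_card => g; apply/imsetP/idP => [[f ff ->] | ].
  by apply/setXP; rewrite !inE; exact: cut_hom ff.
case: g => g1 g2 /setXP; rewrite !inE => -[g1D g2A].
by exists (glue (g1, g2)); [exact: glue_hom | rewrite cutK].
Qed.

End Closed.

Lemma card_fibre :
  #|fibre| = closed * (#|homs_FP| * #|homs_FQ|).
Proof.
case: (boolP closed) => [cP | ncP]; first by rewrite mul1n card_fibre_closed.
rewrite mul0n; apply/eqP; rewrite cards_eq0; apply/eqP/setP => f.
by rewrite in_set0; apply: contraNF ncP; exact: fibre_closed.
Qed.

End ProductFormula.

Section Determination.
Variables (S : finType) (ar : S -> nat).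
Hypothesis ar_pos : forall R, 0 < ar R.
Implicit Types A D F : instance ar.

Definition bnd F : nat := \max_(y <- adom F) y.

Lemma bnd_le F : {in adom F, forall y, y <= bnd F}.
Proof. by move=> y yF; rewrite /bnd (leq_bigmax_seq (F := id) _ yF). Qed.

Lemma homN_dunion n m A D F :
  {in adom F, forall y, y <= n} ->
  {in adom D, forall y, y.*2.+1 <= m} -> {in adom A, forall y, y.*2.+1 <= m} ->
  hom_N F (dunion A D) = \sum_(P : {set 'I_n.+1})
    closed F P * (hom_N (restrict F (pset P)) D * hom_N (restrict F (predC (pset P))) A).
Proof.
move=> bF bD bA.
have bU : {in adom (dunion A D), forall y, y <= m}.
  move=> z /adom_dunion; case: (boolP (odd z)) => oz zAD.
    by rewrite -(oenc_half oz); exact: bA.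
  by rewrite -(even_halfK oz); apply: ltnW; exact: bD.
have bFq q : {in adom (restrict F q), forall y, y <= n}.
  by move=> y /adom_restrict [/bF].
have bDA (B : instance ar) : {in adom B, forall y, y.*2.+1 <= m} -> {in adom B, forall y, y <= m}.
  by move=> bB y /bB; apply: leq_trans; rewrite leqW // -addnn leq_addr.
rewrite (hom_N_normal bF bU) -sum1_card (partition_big (side F) xpredT) //=.
apply: eq_bigr => P _.
rewrite (hom_N_normal (bFq _) (bDA _ bD)) (hom_N_normal (bFq _) (bDA _ bA)).
rewrite -(card_fibre ar_pos bF bD bA) -sum1_card; apply: eq_bigl => f.
by rewrite !inE.
Qed.

Lemma sum_gt0_eq (I : finType) (g g' : I -> nat) :
  (forall i, (0 < g i) = (0 < g' i)) -> (0 < \sum_i g i) = (0 < \sum_i g' i).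
Proof.
move=> gg'; rewrite !lt0n !sum_nat_eq0; congr negb; apply: eq_forallb => i.
by have := gg' i; rewrite !lt0n => /negb_inj ->.
Qed.

Lemma homK_dunion_det K n A D D' F :
  {in adom F, forall y, y <= n} ->
  (forall P : {set 'I_n.+1}, homK K (restrict F (pset P)) D = homK K (restrict F (pset P)) D') ->
  homK K F (dunion A D) = homK K F (dunion A D').
Proof.
move=> bF eqD; set M := bnd D + bnd D' + bnd A.
have bM X : bnd X <= M -> {in adom X, forall y, y.*2.+1 <= M.*2.+1}.
  by move=> XM y /bnd_le yX; rewrite ltnS leq_double (leq_trans yX XM).
have bD := bM D (leq_trans (leq_addr _ _) (leq_addr _ _)).
have bD' := bM D' (leq_trans (leq_addl _ _) (leq_addr _ _)).
have bA := bM A (leq_addl _ _).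
rewrite /homK; case: K eqD => /= eqD.
  rewrite !homB_N (homN_dunion bF bD bA) (homN_dunion bF bD' bA); congr nat_of_bool.
  apply: sum_gt0_eq => P; rewrite !muln_gt0.
  by have := congr1 (leq 1) (eqD P); rewrite !homB_N !lt0b => ->.
by rewrite (homN_dunion bF bD bA) (homN_dunion bF bD' bA); apply: eq_bigr => P _; rewrite eqD.
Qed.

End Determination.

Section QueryAlgorithms.
Variables (S : finType) (ar : S -> nat).
Implicit Types A D : instance ar.

Definition homvec K k (G : k.-tuple (instance ar)) D : k.-tuple nat :=
  map_tuple (fun Gi => homK K Gi D) G.

Lemma admits_of_determined K (C : instance ar -> Prop) k (G : k.-tuple (instance ar)) :
  0 < k -> (forall D D', homvec K G D = homvec K G D' -> C D' -> C D) ->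
  admits_left_query_algorithm K C.
Proof.
move=> k0 det; exists k; split => //; exists G, (fun v => exists2 D, v = homvec K G D & C D).
by move=> D; split => [CD | [D' eqv CD']]; [exists D | exact: det eqv CD'].
Qed.

(* CSP(A) to [A]: [D] is equivalent to [A] iff [A -> D] and [D -> A]. *)
Lemma class_of_csp K A :
  admits_left_query_algorithm K (CSP A) -> admits_left_query_algorithm K (hom_equiv_class A).
Proof.
move=> [k [_ [F [X alg]]]]; apply: (admits_of_determined (G := cons_tuple A F)) => //.
move=> D D' eqv [AD' D'A]; case: (congr1 val eqv) => eA eF.
split; first by apply/(homK_pos K); rewrite eA; apply/(homK_pos K).
have eFv : homvec K F D = homvec K F D' by apply: val_inj.
by apply/alg; rewrite -/(homvec K F D) eFv; apply/alg.
Qed.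

Hypothesis ar_pos : forall R, 0 < ar R.

(* [A] to CSP(A): query the restrictions of the given family to all their
   possible [D]-sides, and decide [D -> A] through [A ⊎ D]. *)
Lemma csp_of_class K A :
  admits_left_query_algorithm K (hom_equiv_class A) -> admits_left_query_algorithm K (CSP A).
Proof.
move=> [k [k0 [F [X alg]]]].
pose n := \max_(i < k) bnd (tnth F i).
have bF i : {in adom (tnth F i), forall y, y <= n}.
  move=> y /bnd_le /leq_trans; apply.
  exact: (leq_bigmax (F := fun i => bnd (tnth F i)) i).
pose piece (iP : 'I_k * {set 'I_n.+1}) := restrict (tnth F iP.1) (pset iP.2).
pose G := map_tuple piece (enum_tuple (predT : {pred 'I_k * {set 'I_n.+1}})).
apply: (admits_of_determined (G := G)); first by apply/card_gt0P; exists (Ordinal k0, set0).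
move=> D D' eqv CD'.
have eq_pieces iP : homK K (piece iP) D = homK K (piece iP) D'.
  have := congr1 val eqv; rewrite /= -!map_comp => /eq_in_map E.
  by apply: E; rewrite -enumT mem_enum.
have eqF : homvec K F (dunion A D) = homvec K F (dunion A D').
  apply: eq_from_tnth => i; rewrite !tnth_map /=.
  by apply: (homK_dunion_det ar_pos A (bF i)) => P; exact: eq_pieces (i, P).
apply/(dunion_class A D)/alg; rewrite -/(homvec K F _) eqF.
exact/alg/(dunion_class A D').
Qed.

End QueryAlgorithms.

Theorem mainTheorem6 (S : finType) (ar : S -> nat)
    (ar_pos : forall R : S, 0 < ar R)
    (A : instance ar) (K : semiring) :
  admits_left_query_algorithm K (hom_equiv_class A) <->
  admits_left_query_algorithm K (CSP A).
Proof. by split; [exact: csp_of_class | exact: class_of_csp]. Qed.
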